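(* Let $i\ge 5$ be an odd integer and let \[B(i)=\begin{cases}\{\tfrac{i+1}{2}+1,\tfrac{i+1}{2}+3,\dots,i\}, & \text{if } (i+1)/2 \text{ is even},\\ \{\tfrac{i+1}{2},\tfrac{i+1}{2}+2,\dots,i\}, & \text{if } (i+1)/2 \text{ is odd}.\end{cases}\] Then $S(i)=\bigcap_{j\in B(i)}T(j)$, and this intersection is a factorization of $S(i)$ into irreducible numerical semigroups (i.e. it cannot be refined).
   Context: $\mathbb{N}$ denotes the non-negative integers. A numerical semigroup is a submonoid of $(\mathbb{N},+)$ with finite complement. A numerical semigroup is irreducible if it cannot be written as the intersection of two numerical semigroups properly containing it. For an odd integer $j\ge 3$, $T(j)=\{0,\tfrac{j+1}{2},\tfrac{j+1}{2}+1,\dots,j-1\}\cup\{n\in\mathbb{Z}:n\ge j+1\}$; each $T(j)$ is an irreducible numerical semigroup. For odd $i\ge5$, $S(i)=\langle 2,i\rangle\cap T(i)$, where $\langle 2,i\rangle=\{2x+iy:x,y\in\mathbb{N}\}$. Given a numerical semigroup $S$ and irreducible numerical semigroups $S_1,\dots,S_n$, the expression $S_1\cap\dots\cap S_n$ is a factorization of $S$ (of length $n$) if $S=S_1\cap\dots\cap S_n$ and $S\neq\bigcap_{j\in J}S_j$ for every nonempty proper subset $J\subsetneq\{1,\dots,n\}$. *)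

From mathcomp Require Import all_boot.
Set Implicit Arguments. Unset Strict Implicit. Unset Printing Implicit Defensive.

Definition numerical_semigroup (S : nat -> Prop) : Prop :=
  [/\ S 0,
      (forall x y, S x -> S y -> S (x + y)) &
      exists N, forall n, N <= n -> S n].

Definition proper_superset (S S1 : nat -> Prop) : Prop :=
  (forall n, S n -> S1 n) /\ exists n, S1 n /\ ~ S n.

Definition irreducible (S : nat -> Prop) : Prop :=
  numerical_semigroup S /\
  ~ (exists S1 S2 : nat -> Prop,
       [/\ numerical_semigroup S1, numerical_semigroup S2,
           proper_superset S S1, proper_superset S S2 &
           forall n, S n <-> (S1 n /\ S2 n)]).

Definition T (j : nat) : nat -> Prop :=
  fun n => n = 0 \/ ((j + 1) %/ 2 <= n /\ n <= j - 1) \/ j + 1 <= n.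

Definition gen2 (i : nat) : nat -> Prop :=
  fun n => exists x y, n = 2 * x + i * y.

Definition S (i : nat) : nat -> Prop := fun n => gen2 i n /\ T i n.

Definition Bstart (i : nat) : nat :=
  let h := (i + 1) %/ 2 in if odd h then h else h + 1.

Definition B (i : nat) : seq nat :=
  [seq Bstart i + 2 * k | k <- iota 0 ((i - Bstart i) %/ 2 + 1)].

Definition factorization (S : nat -> Prop) (n : nat) (F : 'I_n -> nat -> Prop)
  : Prop :=
  [/\ 0 < n,
      (forall k, irreducible (F k)),
      (forall x, S x <-> forall k, F k x) &
      forall J : {set 'I_n}, J != set0 -> J != setT ->
        ~ (forall x, S x <-> forall k, k \in J -> F k x)].
Arguments factorization S n F : clear implicits.

From mathcomp Require Import all_boot.
From mathcomp Require Import zify.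

(* Write i = 2m+1.  Then T(2d+1) = N \ ([1, d] u {2d+1}), and S(i) consists of
   0, the even numbers >= m+1 and everything >= 2m+2; the odd numbers 2d+1 in
   [m+1, 2m] are removed exactly by the T(2d+1) with m <= 2d, and these d are
   the indices of B(i).  Each T(2d+1) is irreducible because every proper
   oversemigroup contains its Frobenius number 2d+1 (a gap n <= d is
   complemented to 2d+1 by 2d+1-n in T(2d+1)), and the factorization is
   irredundant because 2d+1 lies in every other member. *)

Lemma irreducible_of_forced_gap (S : nat -> Prop) (f : nat) :
  numerical_semigroup S -> ~ S f ->
  (forall S', (forall x y, S' x -> S' y -> S' (x + y)) ->
     (forall x, S x -> S' x) -> forall n, S' n -> ~ S n -> S' f) ->
  irreducible S.
Proof.
move=> semiS Sf forced; split=> // -[S1 [S2 [[_ add1 _] [_ add2 _] [sub1 [n1 [S1n1 Sn1]]]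
  [sub2 [n2 [S2n2 Sn2]]] S12]]].
by apply/Sf/S12; split; [exact: forced add1 sub1 n1 S1n1 Sn1
                        | exact: forced add2 sub2 n2 S2n2 Sn2].
Qed.

Lemma irredundant_of_witnesses (S : nat -> Prop) (n : nat) (F : 'I_n -> nat -> Prop) :
  (forall x, S x <-> forall k, F k x) ->
  (forall k, exists x, ~ F k x /\ forall l, l != k -> F l x) ->
  forall J : {set 'I_n}, J != setT ->
    ~ (forall x, S x <-> forall k, k \in J -> F k x).
Proof.
move=> SF wit J JT SJ.
have [k kJ] : exists k, k \notin J.
  apply/existsP; apply: contraR JT => /existsPn notJ.
  by apply/eqP/setP => k; rewrite inE; have := notJ k; rewrite negbK.
have [x [Fkx Flx]] := wit k.
apply/Fkx/(proj1 (SF x)); apply/SJ => l lJ; apply: Flx.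
by apply: contraNneq kJ => <-.
Qed.

Lemma T_odd d x : T (2*d+1) x <-> x = 0 \/ d+1 <= x <= 2*d \/ 2*d+2 <= x.
Proof.
rewrite /T; have -> : (2*d+1+1) %/ 2 = d+1 by lia.
have -> : 2*d+1-1 = 2*d by lia.
by split=> -[->|[xd|xd]]; [left|right; left; lia|right; right; lia
                          |left|right; left; lia|right; right; lia].
Qed.

Lemma numerical_semigroup_T_odd d : numerical_semigroup (T (2*d+1)).
Proof.
split; first by left.
  by move=> x y /T_odd Tx /T_odd Ty; apply/T_odd; lia.
by exists (2*d+2) => n dn; apply/T_odd; lia.
Qed.

Lemma irreducible_T_odd d : irreducible (T (2*d+1)).
Proof.
apply: (@irreducible_of_forced_gap _ (2*d+1) (numerical_semigroup_T_odd d)).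
  by move/T_odd; lia.
move=> S' addS' subS' n S'n Tn.
have [<- //|nf] := eqVneq n (2*d+1).
have small_n : 1 <= n <= d by move: Tn nf; rewrite T_odd => Tn /eqP; lia.
have -> : 2*d+1 = n + (2*d+1-n) by lia.
by apply: addS' => //; apply/subS'/T_odd; lia.
Qed.

Lemma S_odd m x :
  S (2*m+1) x <-> x = 0 \/ (exists e, x = 2*e /\ m+1 <= x) \/ 2*m+2 <= x.
Proof.
rewrite /S /gen2 T_odd; split.
  case=> -[a [[|y] ->]] [|[|]] Tx; try by right; right; lia.
  - by left; lia.
  - by right; left; exists a; lia.
case=> [->|[[e [-> me]]|mx]]; first by split; [exists 0, 0|left]; lia.
  split; first by exists e, 0; lia.
  by right; case: (leqP (2*e) (2*m)) => ?; [left|right]; lia.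
split; last by right; right.
have [e [xe|xe]] : exists e, x = 2*e \/ x = 2*e+1 by exists x./2; lia.
  by exists e, 0; lia.
by exists (e - m), 1; lia.
Qed.

Lemma S_odd_bigcap m c x : m <= 2*c <= m+1 ->
  S (2*m+1) x <-> forall d, c <= d <= m -> T (2*d+1) x.
Proof.
move=> mc; rewrite S_odd; split.
  by move=> Sx d cd; apply/T_odd; case: Sx => [->|[[e [-> me]]|mx]]; lia.
move=> Tx; have /T_odd [->|[mx|mx]] : T (2*m+1) x by apply: Tx; lia.
- by left.
- have [e [xe|xe]] : exists e, x = 2*e \/ x = 2*e+1 by exists x./2; lia.
    by right; left; exists e; lia.
  have /T_odd : T (2*e+1) x by apply: Tx; lia.
  lia.
- by right; right.
Qed.

Lemma T_odd_odd d d' : d <= 2*d' -> d != d' -> T (2*d+1) (2*d'+1).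
Proof. by move=> dd' /eqP ne_dd'; apply/T_odd; lia. Qed.

Lemma B_odd m :
  B (2*m+1) = [seq 2*((m.+1)./2 + k)+1 | k <- iota 0 (m - (m.+1)./2).+1].
Proof.
rewrite /B; have c2 := odd_double_half m.+1; rewrite -muln2 in c2.
have -> : Bstart (2*m+1) = 2 * (m.+1)./2 + 1.
  rewrite /Bstart; have -> : (2*m+1+1) %/ 2 = m.+1 by lia.
  by move: c2; case: (odd m.+1) => /=; lia.
have -> : (2*m+1 - (2 * (m.+1)./2 + 1)) %/ 2 + 1 = (m - (m.+1)./2).+1 by lia.
by apply: eq_map => k; lia.
Qed.

Lemma half_succ_bounds m : m <= 2 * (m.+1)./2 <= m+1.
Proof. by have := odd_double_half m.+1; rewrite -muln2; case: odd => /=; lia. Qed.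

Lemma size_B_odd m : size (B (2*m+1)) = (m - (m.+1)./2).+1.
Proof. by rewrite B_odd size_map size_iota. Qed.

Lemma nth_B_odd m k : k < size (B (2*m+1)) ->
  nth 0 (B (2*m+1)) k = 2*((m.+1)./2 + k)+1.
Proof. by rewrite size_B_odd => lt_k; rewrite B_odd (nth_map 0) ?size_iota ?nth_iota. Qed.

Lemma S_odd_bigcap_nth m x :
  S (2*m+1) x <-> forall k : 'I_(size (B (2*m+1))), T (nth 0 (B (2*m+1)) k) x.
Proof.
rewrite (S_odd_bigcap _ _ x (half_succ_bounds m)); split=> [Tx k | Tx d cd].
  by rewrite nth_B_odd //; apply: Tx; have := ltn_ord k; have := size_B_odd m; lia.
have lt_k : d - (m.+1)./2 < size (B (2*m+1)) by rewrite size_B_odd; lia.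
have := Tx (Ordinal lt_k); rewrite nth_B_odd //=.
by have -> : (m.+1)./2 + (d - (m.+1)./2) = d by lia.
Qed.

Theorem lemma2p2 (i : nat) :
  odd i -> 5 <= i ->
  (forall x, S i x <-> forall j, j \in B i -> T j x) /\
  factorization (S i) (size (B i)) (fun k => T (nth 0 (B i) k)).
Proof.
move=> odd_i _.
have [m ->] : exists m, i = 2*m+1.
  by exists i./2; have := odd_double_half i; rewrite odd_i -muln2; lia.
have capB := S_odd_bigcap_nth m.
split.
  move=> x; rewrite capB; split=> [Tx j jB | Tx k]; last exact/Tx/mem_nth.
  by rewrite -(nth_index 0 jB); apply: (Tx (Ordinal _)); rewrite index_mem.
split=> //; first by rewrite size_B_odd.
  by move=> k; rewrite nth_B_odd //; exact: irreducible_T_odd.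
move=> J _ JT; apply: (@irredundant_of_witnesses _ _ _ capB _ J JT) => k.
have mc := half_succ_bounds m.
exists (2*((m.+1)./2 + k)+1); rewrite !nth_B_odd //; split.
  by move/T_odd; lia.
move=> l lk; rewrite nth_B_odd //; apply: T_odd_odd.
  by have := ltn_ord l; have := size_B_odd m; lia.
by apply: contra lk => /eqP e; apply/eqP/val_inj => /=; lia.
Qed.
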